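(* Let $P$ be a finite semipure poset of length $n$ and $t\ge 1$ an integer. For a maximal chain $C=\{x_0<x_1<\dots<x_m\}$ of $P$ and $d=(d_1,\dots,d_m)\in\{0,1\}^m$, let $[C,d]$ be the set of maximal chains $\{\hat 0<(x_0,f_0)<(x_1,f_1)<\dots<(x_m,f_m)<\hat 1\}$ of $\widehat{P*T_{t,n}}$ with $r(f_i)-r(f_{i-1})=d_i$ for all $i\in[m]$. Then, as $C$ ranges over the maximal chains of $P$ (of any length $m$) and $d$ ranges over $\{0,1\}^m$, the sets $[C,d]$ partition the set of maximal chains of $\widehat{P*T_{t,n}}$, and $|[C,d]|=t^{\,d_1+\dots+d_m}$.
   Context: All posets are finite. A poset $P$ is semipure if for every $x\in P$ all maximal chains of $P_{\le x}$ have the same length, the rank $r_P(x)$. For semipure $P,Q$, the Rees product $P*Q$ is $\{(p,q)\in P\times Q: r_P(p)\ge r_Q(q)\}$ with $(p_1,q_1)\le(p_2,q_2)$ iff $p_1\le p_2$, $q_1\le q_2$, and $r_P(p_2)-r_P(p_1)\ge r_Q(q_2)-r_Q(q_1)$. $T_{t,n}$ is the poset of all sequences of elements of $\{1,\dots,t\}$ of length at most $n$ (including the empty sequence, its minimum $\hat 0_T$), ordered by ``is a prefix of''; its Hasse diagram is a complete $t$-ary tree of height $n$ rooted at the bottom, and $r(f)$ is the length of the sequence $f$. $\hat Q$ denotes $Q$ with a new minimum $\hat 0$ and new maximum $\hat 1$ adjoined. *)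

From HB Require Import structures.
From mathcomp Require Import all_boot all_order.
Set Implicit Arguments. Unset Strict Implicit. Unset Printing Implicit Defensive.
Import Order.TTheory.

Definition chain_in (T : eqType) (A : pred T) (lt : rel T) (s : seq T) : bool :=
  sorted lt s && all A s.

Definition maxchain_in (T : eqType) (A : pred T) (lt : rel T) (s : seq T) : Prop :=
  chain_in A lt s /\
  forall s' : seq T, chain_in A lt s' -> {subset s <= s'} -> {subset s' <= s}.

Section FinPoset.
Variables (disp : Order.disp_t) (P : finPOrderType disp).

Definition poset_lt : rel P := fun x y => (x < y)%O.

Definition downset (x : P) : pred P := fun y => (y <= x)%O.

Definition semipure : Prop :=
  forall (x : P) (s1 s2 : seq P),
    maxchain_in (downset x) poset_lt s1 -> maxchain_in (downset x) poset_lt s2 ->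
    size s1 = size s2.

Definition poset_length (n : nat) : Prop :=
  (exists s : seq P, chain_in predT poset_lt s /\ size s = n.+1) /\
  (forall s : seq P, chain_in predT poset_lt s -> size s <= n.+1).

(* rank r_P(x): length of a longest chain of P_{<=x}; for semipure P this is the
   common length of all maximal chains of P_{<=x}. *)
Definition prank (x : P) : nat :=
  \max_(k < #|P| | [exists s : (k.+1).-tuple P,
                      sorted poset_lt s && all (downset x) s]) (k : nat).

(* Rees product P * T_{t,n}: carrier inside P * seq 'I_t;
   T_{t,n} = sequences over {1..t} (here 'I_t) of length <= n, prefix order,
   rank = length. *)
Definition rees_mem (n t : nat) : pred (P * seq 'I_t) :=
  fun a => (size a.2 <= n) && (size a.2 <= prank a.1).

Definition rees_le (t : nat) : rel (P * seq 'I_t) :=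
  fun a b => [&& (a.1 <= b.1)%O, prefix a.2 b.2 &
                 prank a.1 + size b.2 <= prank b.1 + size a.2].

End FinPoset.

(* Adjoining a new minimum (inr false) and maximum (inr true) to a poset on X. *)
Definition hat_mem (X : Type) (A : pred X) : pred (X + bool) :=
  fun a => match a with inl x => A x | inr _ => true end.

Definition hat_le (X : Type) (le : rel X) : rel (X + bool) :=
  fun a b => match a, b with
             | inr false, _ => true
             | _, inr true => true
             | inl x, inl y => le x y
             | _, _ => false
             end.

Definition strict (X : eqType) (le : rel X) : rel X := fun a b => (a != b) && le a b.

Definition rees_hat_maxchain disp (P : finPOrderType disp) (n t : nat)
  (c : seq ((P * seq 'I_t) + bool)) : Prop :=
  maxchain_in (hat_mem (@rees_mem disp P n t)) (strict (hat_le (@rees_le disp P t))) c.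

(* The block [C,d]: C = x_0 < ... < x_m (size C = m+1), d = (d_1..d_m) (size d = m). *)
Definition rees_block disp (P : finPOrderType disp) (n t : nat)
  (C : seq P) (d : seq bool) (c : seq ((P * seq 'I_t) + bool)) : Prop :=
  @rees_hat_maxchain disp P n t c /\
  exists fs : seq (seq 'I_t),
    [/\ size fs = size C,
        c = inr false :: rcons [seq inl x | x <- zip C fs] (inr true) &
        forall i, 0 < i < size C ->
          size (nth [::] fs i) = size (nth [::] fs i.-1) + nat_of_bool (nth false d i.-1)].

From HB Require Import structures.
From mathcomp Require Import all_boot all_order zify.
Set Implicit Arguments. Unset Strict Implicit. Unset Printing Implicit Defensive.
Import Order.TTheory.

(* For a strict order, a chain is maximal iff it is saturated (everything
   comparable with all of it lies in it); for a sorted chain this means that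
   nothing lies below its first element, above its last one, or strictly between
   two consecutive ones.
   Ranks.  prank is strictly monotone, and in a semipure poset the i-th element of
   a maximal chain has rank i, since its initial segment is a maximal chain below it.  Its order is antisymmetric because equal first coordinates force
   equal labels, and every gap of P can be filled by a lifted element.  Hence a
   maximal chain of the hat poset is 0^ < m_1 < ... < m_k < 1^, where the first
   coordinates of the m_i form a maximal chain C of P and, ranks growing by one,
   the labels grow by a bit d_i at each step; conversely such data are maximal.  An element of the block [C, d] is determined by its top label, a word
   of length d_1 + ... + d_m whose prefixes are the other labels; every such word
   occurs, so the block has t ^ (d_1 + ... + d_m) elements (for any t, even 0). *)

Section Chains.
Variables (T : eqType) (A : pred T) (r : rel T).
Hypotheses (r_trans : transitive r) (r_irr : irreflexive r).

Definition saturated (s : seq T) : Prop :=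
  forall z, A z -> (forall y, y \in s -> [\/ y = z, r y z | r z y]) -> z \in s.

Lemma comparable_strict (s : seq T) (z : T) :
  z \notin s -> (forall y, y \in s -> [\/ y = z, r y z | r z y]) ->
  forall y, y \in s -> r y z \/ r z y.
Proof. by move=> zNs Hcmp y ys; case: (Hcmp y ys) => [E||]; [rewrite -E ys in zNs|left|right]. Qed.

Lemma chain_insert s z :
  chain_in A r s -> A z -> (forall y, y \in s -> r y z \/ r z y) ->
  exists2 s', chain_in A r s' &
    size s' = (size s).+1 /\ forall w, (w \in s') = (w == z) || (w \in s).
Proof.
move=> /andP[+ As] Az; elim: s As => [|y s IH] /= As Hs Hcmp.
  by exists [:: z]; rewrite /chain_in /= ?Az //; split=> // w; rewrite inE orbF.
have /andP[Ay {}As] := As.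
have ys : all (r y) s by move: Hs; rewrite path_sortedE // => /andP[].
have [Hyz|Hzy] := Hcmp y (mem_head _ _).
- have [s' /andP[Hs' As'] [Hsz Hmem]] :=
    IH As (path_sorted Hs) (fun w Hw => Hcmp w (@mem_behead _ (y :: s) _ Hw)).
  exists (y :: s'); last by split=> [|w]; rewrite /= ?Hsz // !inE Hmem orbCA.
  rewrite /chain_in /= Ay As' path_sortedE // Hs' !andbT.
  by apply/allP => w; rewrite Hmem => /orP[/eqP->//|/(allP ys)].
- exists (z :: y :: s); last by [].
  by rewrite /chain_in /= Hzy Hs Az Ay As.
Qed.

Lemma maxchainP s : maxchain_in A r s <-> chain_in A r s /\ saturated s.
Proof.
split=> [[Hc Hmax]|[Hc Hsat]].
- split=> // z Az Hcmp; apply/idPn => zNs.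
  have [s' Hc' [_ Hmem]] := chain_insert Hc Az (comparable_strict zNs Hcmp).
  by move: zNs; rewrite (Hmax s' Hc') ?Hmem ?eqxx // => w ws; rewrite Hmem ws orbT.
- split=> // s' /andP[Hs' As'] sub z zs'; apply: Hsat; first exact: (allP As').
  move=> y /sub ys'; have := Hs'; rewrite sorted_pairwise // => Hpw.
  elim: s' Hpw ys' zs' {Hs' As' sub} => //= a s' IH /andP[aa Hpw].
  rewrite !inE => /orP[/eqP->|ys'] /orP[/eqP->|zs'].
  + by constructor 1.
  + by constructor 2; apply: (allP aa).
  + by constructor 3; apply: (allP aa).
  + exact: IH.
Qed.

Lemma longest_maxchain s :
  chain_in A r s -> (forall s', chain_in A r s' -> size s' <= size s) ->
  maxchain_in A r s.
Proof.
move=> Hc Hlong; apply/maxchainP; split=> // z Az Hcmp; apply/idPn => zNs.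
have [s' Hc' [Hsz _]] := chain_insert Hc Az (comparable_strict zNs Hcmp).
by have := Hlong s' Hc'; rewrite Hsz ltnn.
Qed.

Lemma maxchain_nonempty s z : maxchain_in A r s -> A z -> 0 < size s.
Proof. by case/maxchainP => _ Hsat Az; case: s Hsat => // /(_ z Az); apply. Qed.

Lemma sorted_nth_eq_or_lt x0 s i j :
  sorted r s -> i <= j -> j < size s ->
  nth x0 s i = nth x0 s j \/ r (nth x0 s i) (nth x0 s j).
Proof.
move=> Hs; rewrite leq_eqVlt => /orP[/eqP->|ij] js; [by left|right].
exact: (sorted_ltn_nth r_trans x0 Hs i j (ltn_trans ij js) js ij).
Qed.

Lemma saturated_strict s w :
  saturated s -> A w -> (forall y, y \in s -> r y w \/ r w y) -> False.
Proof.
move=> Hsat Aw Hcmp.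
have ws : w \in s by apply: Hsat => // y /Hcmp[]; [constructor 2|constructor 3].
by case: (Hcmp w ws); rewrite r_irr.
Qed.

Lemma saturated_nth x0 s : sorted r s -> 0 < size s ->
  saturated s <->
  [/\ forall w, A w -> r w (nth x0 s 0) -> False,
      forall w, A w -> r (nth x0 s (size s).-1) w -> False &
      forall i, i.+1 < size s -> forall w, A w ->
        r (nth x0 s i) w -> r w (nth x0 s i.+1) -> False].
Proof.
move=> Hs s0; split=> [Hsat|[Hmin Hmax Hcov] w Aw Hcmp].
- have nthP y : y \in s -> exists2 j, j < size s & y = nth x0 s j.
    by move=> ys; exists (index y s); rewrite ?index_mem ?nth_index.
  split=> [w Aw w0|w Aw lw|i Hi w Aw iw wi];
    apply: (saturated_strict Hsat Aw) => _ /nthP[j js ->].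
  + right; have [<-|] := sorted_nth_eq_or_lt x0 Hs (leq0n j) js; first by [].
    exact: r_trans.
  + have jl : j <= (size s).-1 by move: js; clear; lia.
    have ls : (size s).-1 < size s by move: s0; clear; lia.
    left; have [->|] := sorted_nth_eq_or_lt x0 Hs jl ls; first by [].
    by move=> jlt; apply: r_trans lw.
  + case: (leqP j i) => ji.
    * left; have [->|ji'] := sorted_nth_eq_or_lt x0 Hs ji (ltnW Hi); first by [].
      exact: r_trans iw.
    * right; have [<-|ij] := sorted_nth_eq_or_lt x0 Hs ji js; first by [].
      exact: r_trans ij.
- apply/idPn => /comparable_strict/(_ Hcmp) Hstrict.
  have below j : j < size s -> r (nth x0 s j) w.
    elim: j => [|j IH] js; case: (Hstrict _ (mem_nth x0 js)) => // wj.
    + by case: (Hmin w Aw wj).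
    + by case: (Hcov j js w Aw (IH (ltnW js)) wj).
  by apply: (Hmax w Aw); apply: below; move: s0; clear; lia.
Qed.
End Chains.

Section StrictAndHat.
Variables (X : eqType) (le : rel X).
Hypotheses (le_tr : transitive le) (le_antisym : forall a b, le a b -> le b a -> a = b).

Lemma strict_irr : irreflexive (strict le).
Proof. by move=> a; rewrite /strict eqxx. Qed.

Lemma strict_trans : transitive (strict le).
Proof.
move=> b a c /andP[ab le_ab] /andP[bc le_bc]; rewrite /strict (le_tr le_ab le_bc) andbT.
by apply: contraNneq ab => ac; subst c; rewrite (le_antisym le_ab le_bc).
Qed.

Lemma hat_le_trans : transitive (hat_le le).
Proof. by move=> [b|[]] [a|[]] [c|[]] //=; apply: le_tr. Qed.

Lemma hat_le_antisym a b : hat_le le a b -> hat_le le b a -> a = b.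
Proof. by case: a b => [a|[]] [b|[]] //= ab ba; rewrite (le_antisym ab ba). Qed.
End StrictAndHat.

Lemma hat_strict_trans (X : eqType) (le : rel X) :
  transitive le -> (forall a b, le a b -> le b a -> a = b) ->
  transitive (strict (hat_le le)).
Proof.
move=> le_tr le_antisym.
exact: strict_trans (hat_le_trans le_tr) (hat_le_antisym le_antisym).
Qed.

Section Rank.
Variables (disp : Order.disp_t) (P : finPOrderType disp).
Local Notation plt := (@poset_lt disp P).

Lemma poset_lt_trans : transitive plt.
Proof. by move=> y x z; apply: lt_trans. Qed.

Lemma poset_lt_irr : irreflexive plt.
Proof. by move=> x; apply: ltxx. Qed.

Lemma chain_size_card (A : pred P) s : chain_in A plt s -> size s <= #|P|.
Proof.
case/andP => Hs _; rewrite -(card_uniqP (sorted_uniq poset_lt_trans poset_lt_irr Hs)).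
exact: max_card.
Qed.

Lemma prank_ub (x : P) s : chain_in (downset x) plt s -> size s <= (prank x).+1.
Proof.
case: s => [//|a s] Hc; have sP : size s < #|P| := chain_size_card Hc.
rewrite ltnS /prank; have Hsz : size (a :: s) == (size s).+1 by [].
apply: (@leq_bigmax_cond _ _ (fun k : 'I_#|P| => (k : nat)) (Ordinal sP)).
by apply/existsP; exists (Tuple Hsz).
Qed.

Lemma prank_ex (x : P) : exists2 s, chain_in (downset x) plt s & size s = (prank x).+1.
Proof.
have Hx : chain_in (downset x) plt [:: x] by rewrite /chain_in /= /downset lexx.
have P0 : 0 < #|P| := chain_size_card Hx.
pose K := [pred k : 'I_#|P| | [exists s : (k.+1).-tuple P,
                                  sorted plt s && all (downset x) s]].
have K0 : 0 < #|K|.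
  by apply/card_gt0P; exists (Ordinal P0); rewrite inE; apply/existsP; exists [tuple x].
have [k + kmax] := @eq_bigmax_cond _ K (fun k => (k : nat)) K0.
rewrite inE => /existsP[s Hs]; exists s => //.
by rewrite size_tuple /prank -kmax.
Qed.

Lemma prank_lt (x y : P) : (y < x)%O -> prank y < prank x.
Proof.
move=> yx; have [L /andP[Ls Ly] Lsz] := prank_ex y.
have Lx : chain_in (downset x) plt L.
  by rewrite /chain_in Ls; apply: sub_all Ly => w wy; apply: le_trans wy (ltW yx).
have above w : w \in L -> plt w x \/ plt x w.
  by move=> wL; left; apply: le_lt_trans (allP Ly w wL) yx.
have [L' /prank_ub + [L'sz _]] := chain_insert poset_lt_trans Lx (lexx x) above.
by rewrite L'sz Lsz.
Qed.

Lemma prank_le_length n (x : P) : poset_length P n -> prank x <= n.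
Proof.
case=> _ Hlen; have [s /andP[Hs _] Hsz] := prank_ex x.
by have := Hlen s; rewrite /chain_in Hs all_predT Hsz; apply.
Qed.

Lemma maxchain_take_downset x0 (C : seq P) i :
  maxchain_in predT plt C -> i < size C ->
  maxchain_in (downset (nth x0 C i)) plt (take i.+1 C).
Proof.
move=> /(maxchainP _ poset_lt_trans)[/andP[Cs _] Csat] iC; set x := nth x0 C i.
have below y : y \in C -> index y C <= i -> (y <= x)%O.
  move=> yC yi; rewrite -(nth_index x0 yC).
  by have [->|/ltW] := sorted_nth_eq_or_lt poset_lt_trans x0 Cs yi iC.
have above y : y \in C -> i < index y C -> (x < y)%O.
  move=> yC iy; rewrite -(nth_index x0 yC).
  by apply: (sorted_ltn_nth poset_lt_trans x0 Cs) => //; rewrite inE index_mem.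
apply/(maxchainP _ poset_lt_trans); split.
- rewrite /chain_in take_sorted //; apply/allP => y yD.
  by have yC := mem_take yD; rewrite in_take // ltnS in yD; apply: below.
- move=> z zx Hcmp; have zC : z \in C.
    apply: Csat => // y yC; case: (leqP (index y C) i) => [yi|iy].
    + by apply: Hcmp; rewrite in_take // ltnS.
    + by constructor 3; apply: le_lt_trans zx (above y yC iy).
  rewrite in_take // ltnS leqNgt; apply/negP => iz.
  by have := lt_le_trans (above z zC iz) zx; rewrite ltxx.
Qed.

Lemma prank_maxchain x0 (C : seq P) i :
  semipure P -> maxchain_in predT plt C -> i < size C -> prank (nth x0 C i) = i.
Proof.
move=> Psp HC iC; have [L Lc Lsz] := prank_ex (nth x0 C i).
have Lmax : maxchain_in (downset (nth x0 C i)) plt L.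
  by apply: (longest_maxchain poset_lt_trans) => // s' /prank_ub; rewrite Lsz.
have := Psp _ _ _ Lmax (maxchain_take_downset x0 HC iC).
by rewrite Lsz size_takel // => -[].
Qed.
End Rank.

Section ReesOrder.
Variables (disp : Order.disp_t) (P : finPOrderType disp) (t : nat).
Local Notation R := (P * seq 'I_t)%type.
Local Notation rle := (@rees_le disp P t).
Local Notation rlt := (strict rle).

Lemma rees_le_refl : reflexive rle.
Proof. by move=> a; rewrite /rees_le lexx prefix_refl leqnn. Qed.

Lemma rees_le_trans : transitive rle.
Proof.
move=> b a c /and3P[ab1 ab2 ab3] /and3P[bc1 bc2 bc3]; apply/and3P; split.
- exact: le_trans ab1 bc1.
- exact: prefix_trans ab2 bc2.
- by move: ab3 bc3; clear; lia.
Qed.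

(* Two comparable elements of the Rees product with the same first coordinate
   coincide: the rank condition forces equal lengths of the prefix-related labels. *)
Lemma rees_le_fst_eq (a b : R) : rle a b -> a.1 = b.1 -> a = b.
Proof.
case: a b => [p f] [q g] /and3P[/= _ fg fgr] pq; subst q; congr pair.
move: fg; rewrite prefixE => /eqP E; rewrite -E take_oversize //.
by rewrite leq_add2l in fgr.
Qed.

Lemma rees_le_antisym (a b : R) : rle a b -> rle b a -> a = b.
Proof.
move=> ab ba; apply: (rees_le_fst_eq ab).
by apply: le_anti; case/and3P: ab => -> _ _; case/and3P: ba => -> _ _.
Qed.

Lemma rees_lt_trans : transitive rlt.
Proof. exact: strict_trans rees_le_trans rees_le_antisym. Qed.

Lemma hat_rees_lt_trans : transitive (strict (hat_le rle)).
Proof. exact: hat_strict_trans rees_le_trans rees_le_antisym. Qed.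

Lemma rees_lt_fst (a b : R) : rlt a b -> (a.1 < b.1)%O.
Proof.
case/andP => ab ab_le; rewrite lt_neqAle; case/and3P: (ab_le) => -> _ _; rewrite andbT.
by apply: contraNneq ab => /(rees_le_fst_eq ab_le) ->.
Qed.

Lemma rees_lt_of_fst (a b : R) : rle a b -> (a.1 < b.1)%O -> rlt a b.
Proof.
move=> ab_le ab; rewrite /strict ab_le andbT.
by apply: contraTneq ab => ->; rewrite ltxx.
Qed.
End ReesOrder.

(* Gaps of P lift to the Rees product P * T_{t,n}: any w below, above, or between
   (the first coordinates of) elements of the Rees product is the first coordinate
   of an element comparable with them, obtained by truncating a label so that the
   rank condition holds. *)
Section ReesLift.
Variables (disp : Order.disp_t) (P : finPOrderType disp) (n t : nat).
Local Notation rmem := (@rees_mem disp P n t).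
Local Notation rle := (@rees_le disp P t).
Local Notation R := (P * seq 'I_t)%type.

Lemma rees_lift_below (a : R) (w : P) :
  rmem a -> (w < a.1)%O -> exists g, rmem (w, g) /\ rle (w, g) a.
Proof.
case: a => p f /andP[/= fn fp] /= wp; have := prank_lt wp => rwp.
exists (take (size f - (prank p - prank w)) f).
rewrite /rees_mem /rees_le /= size_take_min (ltW wp) prefix_take /=.
by split; [apply/andP; split|]; move: fn fp rwp; clear; lia.
Qed.

Lemma rees_lift_above (a : R) (w : P) :
  rmem a -> (a.1 < w)%O -> rmem (w, a.2) /\ rle a (w, a.2).
Proof.
case: a => p f /andP[/= fn fp] /= pw; have := prank_lt pw => rpw.
rewrite /rees_mem /rees_le /= (ltW pw) prefix_refl /=.
by split; [apply/andP; split|]; move: fn fp rpw; clear; lia.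
Qed.

Lemma rees_lift_between (a b : R) (w : P) :
  rmem a -> rmem b -> rle a b -> (a.1 < w)%O -> (w < b.1)%O ->
  exists g, [/\ rmem (w, g), rle a (w, g) & rle (w, g) b].
Proof.
case: a b => [p1 f1] [p2 f2] /andP[/= f1n f1p] /andP[/= f2n f2p] /and3P[/= _ f12 r12].
move=> /= p1w wp2.
have := prank_lt p1w; have := prank_lt wp2; have := size_prefix f12.
set k := maxn (size f1) (size f2 - (prank p2 - prank w)) => s12 r2 r1.
have kf2 : k <= size f2 by rewrite geq_max s12 leq_subr.
exists (take k f2); rewrite /rees_mem /rees_le /= size_takel // prefix_take.
have -> : prefix f1 (take k f2).
  by move: f12; rewrite !prefixE => /eqP E; rewrite take_takel ?E // leq_maxl.
rewrite (ltW p1w) (ltW wp2) /k.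
by split; [apply/andP; split| |]; move: f1n f1p f2n f2p r12 s12 r1 r2; clear; lia.
Qed.
End ReesLift.

Lemma all_inl (A B : Type) (s : seq (A + B)) :
  all (fun y => if y is inl _ then true else false) s -> exists m, s = [seq inl x | x <- m].
Proof.
elim: s => [|[a|b] s IH] //=; first by exists [::].
by case/IH => m ->; exists (a :: m).
Qed.

Section HatChains.
Variables (disp : Order.disp_t) (P : finPOrderType disp) (n t : nat).
Local Notation R := (P * seq 'I_t)%type.
Local Notation plt := (@poset_lt disp P).
Local Notation rmem := (@rees_mem disp P n t).
Local Notation rle := (@rees_le disp P t).
Local Notation rlt := (strict rle).
Local Notation hlt := (strict (hat_le rle)).
Local Notation hat_rees_lt_trans := (@hat_rees_lt_trans disp P t).
Local Notation poset_lt_trans := (@poset_lt_trans disp P).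
Local Notation poset_lt_irr := (@poset_lt_irr disp P).

Definition hat_chain (m : seq R) : seq (R + bool) :=
  inr false :: rcons [seq inl x | x <- m] (inr true).

Lemma hat_chain_inj : injective hat_chain.
Proof. by move=> m1 m2 [/rcons_inj [] /(inj_map (fun x y => @inl_inj _ bool x y))]. Qed.

Lemma size_hat_chain m : size (hat_chain m) = (size m).+2.
Proof. by rewrite /= size_rcons size_map. Qed.

Lemma nth_hat_chain_mid a0 m i :
  i < size m -> nth (inr false) (hat_chain m) i.+1 = inl (nth a0 m i).
Proof. by move=> im; rewrite /= nth_rcons size_map im (nth_map a0). Qed.

Lemma nth_hat_chain_last m : nth (inr false) (hat_chain m) (size m).+1 = inr true.
Proof. by rewrite /= nth_rcons size_map ltnn eqxx. Qed.

Lemma hat_lt_inl (a b : R) : hlt (inl a) (inl b) = rlt a b.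
Proof. by []. Qed.

Lemma hat_chain_chain m :
  chain_in (hat_mem rmem) hlt (hat_chain m) = all rmem m && sorted rlt m.
Proof.
rewrite /chain_in /= all_rcons /= all_map andbC; congr andb.
by rewrite rcons_path; case: m => [|a m] //=; rewrite last_map /= andbT path_map.
Qed.

(* Every maximal chain of the hat poset has the shape [hat_chain m]: it must start
   at the bottom 0^ and end at the top 1^, and it contains each of them once. *)
Lemma hat_maxchain_shape c : @rees_hat_maxchain disp P n t c -> exists m, c = hat_chain m.
Proof.
move=> Hc.
have c0 := maxchain_nonempty hat_rees_lt_trans Hc (isT : hat_mem rmem (inr false)).
case/(maxchainP _ hat_rees_lt_trans): Hc => /andP[Hs _] Hsat.
have [Hmin Hmax _] :=
  (saturated_nth _ hat_rees_lt_trans (@strict_irr _ _) (inr false) Hs c0).1 Hsat.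
have Huniq := sorted_uniq hat_rees_lt_trans (@strict_irr _ _) Hs.
have Hbot : nth (inr false) c 0 = inr false.
  by case: (nth _ c 0) Hmin => [a|[]] // /(_ (inr false)) => /(_ isT isT).
have Htop : nth (inr false) c (size c).-1 = inr true.
  by case: (nth _ c _) Hmax => [a|[]] // /(_ (inr true)) => /(_ isT isT).
case: c c0 Hbot Htop Huniq {Hs Hsat Hmin Hmax} => //= _ c _ ->.
case/lastP: c => [|c l] //=; rewrite size_rcons /= nth_rcons ltnn eqxx => ->.
rewrite rcons_uniq => /andP[+ /andP[+ _]].
rewrite mem_rcons inE negb_or => /andP[_ Nbot Ntop].
have [m ->] : exists m, c = [seq inl x | x <- m].
  apply: all_inl; apply/allP => -[a|[]] //= y_in.
  - by rewrite y_in in Ntop.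
  - by rewrite y_in in Nbot.
by exists m.
Qed.

(* A maximal chain of the hat poset projects onto a maximal chain of P: a gap in
   the projection could be filled by a lifted element, contradicting maximality
   upstairs. *)
Lemma hat_maxchain_proj (p0 : P) m :
  @rees_hat_maxchain disp P n t (hat_chain m) ->
  [/\ all rmem m, sorted rlt m & maxchain_in predT plt (map fst m)].
Proof.
pose a0 : R := (p0, [::]).
case/(maxchainP _ hat_rees_lt_trans) => Hc Hsat.
have /andP[Hs _] := Hc; move: Hc; rewrite hat_chain_chain => /andP[Hmem Hsort].
have [_ _ Hcov] := (saturated_nth _ hat_rees_lt_trans (@strict_irr _ _) (inr false) Hs
                      (ltn0Sn _)).1 Hsat.
have gap i (a : R) : i <= size m -> rmem a ->
    hlt (nth (inr false) (hat_chain m) i) (inl a) ->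
    hlt (inl a) (nth (inr false) (hat_chain m) i.+1) -> False.
  by move=> im; apply: (Hcov i _ (inl a)); rewrite size_hat_chain ltnS.
have mem i : i < size m -> rmem (nth a0 m i) by move=> im; apply: (all_nthP a0 Hmem).
have m0 : 0 < size m.
  by case: m {Hs Hsat Hmem Hsort Hcov mem} gap => // /(_ 0 a0 (leqnn 0) isT isT isT).
have lm : (size m).-1 < size m by rewrite ltn_predL.
have Hfs : sorted plt (map fst m).
  by apply: (homo_sorted _ _ Hsort) => a b; apply: rees_lt_fst.
split=> //; apply/(maxchainP _ poset_lt_trans); split; first by rewrite /chain_in Hfs all_predT.
apply/(saturated_nth _ poset_lt_trans poset_lt_irr p0 Hfs); first by rewrite size_map.
rewrite size_map; split=> [w _|w _|i im w _].
- rewrite (nth_map a0) // => wm; have [g [wg gm]] := rees_lift_below (mem 0 m0) wm.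
  apply: (gap 0 (w, g)) => //; rewrite (nth_hat_chain_mid a0) // hat_lt_inl.
  by apply: rees_lt_of_fst.
- rewrite (nth_map a0) // => mw; have [mw' wm] := rees_lift_above (mem _ lm) mw.
  apply: (gap (size m).-1.+1 (w, _) _ mw').
  + by rewrite prednK.
  + by rewrite (nth_hat_chain_mid a0) // hat_lt_inl; apply: rees_lt_of_fst.
  + by rewrite prednK // nth_hat_chain_last.
- have im' := ltnW im; rewrite !(nth_map a0) // => iw wi.
  have /andP[_ Hle] :=
    sorted_ltn_nth (@rees_lt_trans disp P t) a0 Hsort i i.+1 im' im (ltnSn i).
  have [g [wg ig gi]] := rees_lift_between (mem i im') (mem i.+1 im) Hle iw wi.
  apply: (gap i.+1 (w, g) im' wg).
  + by rewrite (nth_hat_chain_mid a0) // hat_lt_inl; apply: rees_lt_of_fst.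
  + by rewrite (nth_hat_chain_mid a0) // hat_lt_inl; apply: rees_lt_of_fst.
Qed.

(* Conversely, a chain of the Rees product projecting onto a maximal chain of P
   gives a maximal chain of the hat poset: an element comparable with the whole
   chain has the first coordinate of some link, hence equals that link. *)
Lemma hat_maxchain_lift m :
  all rmem m -> sorted rlt m -> maxchain_in predT plt (map fst m) ->
  @rees_hat_maxchain disp P n t (hat_chain m).
Proof.
move=> Hmem Hsort /(maxchainP _ poset_lt_trans)[_ Psat].
apply/(maxchainP _ hat_rees_lt_trans); split; first by rewrite hat_chain_chain Hmem Hsort.
move=> [[z g]|b] //= zg Hcmp; last first.
  by case: b {zg Hcmp}; rewrite ?mem_head // in_cons mem_rcons mem_head orbT.
have cmp_link a : a \in m -> [\/ a = (z, g), rlt a (z, g) | rlt (z, g) a].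
  move=> am; have := Hcmp (inl a); rewrite in_cons mem_rcons in_cons map_f ?orbT //.
  by case/(_ isT) => [[->]||]; [constructor 1|constructor 2|constructor 3].
have /mapP[a am za] : z \in map fst m.
  apply: Psat => // _ /mapP[a am ->].
  case: (cmp_link a am) => [->|/rees_lt_fst|/rees_lt_fst];
    [by constructor 1|by constructor 2|by constructor 3].
suff <- : a = (z, g) by rewrite in_cons mem_rcons in_cons map_f ?orbT.
case: (cmp_link a am) => [//|/andP[_ ag]|/andP[_ ga]].
- exact: rees_le_fst_eq ag (esym za).
- exact/esym/(rees_le_fst_eq ga za).
Qed.
End HatChains.

Lemma step_bit (a b : nat) : a <= b <= a.+1 -> b = a + (b != a).
Proof. by case: eqP => [->|ne]; rewrite ?addn0 ?addn1 //; lia. Qed.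

Section Blocks.
Variables (disp : Order.disp_t) (P : finPOrderType disp) (n t : nat).
Local Notation R := (P * seq 'I_t)%type.
Local Notation plt := (@poset_lt disp P).
Local Notation rle := (@rees_le disp P t).
Local Notation rlt := (strict rle).

(* Along a chain of the Rees product lying over a maximal chain of a semipure P,
   consecutive labels grow by at most one letter, since ranks grow by exactly one. *)
Lemma label_step (p0 : P) m j :
  semipure P -> sorted rlt m -> maxchain_in predT plt (map fst m) -> j.+1 < size m ->
  size (nth (p0, [::]) m j).2 <= size (nth (p0, [::]) m j.+1).2
    <= (size (nth (p0, [::]) m j).2).+1.
Proof.
move=> Psp Hsort HC jm; set a0 : R := (p0, [::]).
have rk i : i < size m -> prank (nth a0 m i).1 = i.
  by move=> im; rewrite -(nth_map a0 p0) // prank_maxchain ?size_map.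
have /andP[_ /and3P[_ pre rank]] :=
  sorted_ltn_nth (@rees_lt_trans disp P t) a0 Hsort j j.+1 (ltnW jm) jm (ltnSn j).
by rewrite size_prefix //=; move: rank; rewrite !rk ?(ltnW jm) // addSn -addnS leq_add2l.
Qed.

Lemma block_of_maxchain (p0 : P) c :
  semipure P -> @rees_hat_maxchain disp P n t c ->
  exists (C : seq P) (d : seq bool),
    [/\ maxchain_in predT plt C, size d = (size C).-1 & @rees_block disp P n t C d c].
Proof.
move=> Psp Hc; have [m Ec] := hat_maxchain_shape Hc; subst c.
have [_ Hsort HC] := hat_maxchain_proj p0 Hc.
pose fs := map snd m.
exists (map fst m).
exists (mkseq (fun j => size (nth [::] fs j.+1) != size (nth [::] fs j)) (size m).-1).
rewrite size_mkseq size_map; split=> //; split=> //; exists fs; split.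
- by rewrite !size_map.
- by have := zip_unzip m; rewrite /unzip1 /unzip2 => ->.
- move=> [//|j] /=; rewrite size_map => jm; rewrite nth_mkseq; last by move: jm; clear; lia.
  rewrite /fs !(nth_map (p0, [::])) ?(ltnW jm) //.
  exact/step_bit/(label_step p0 Psp Hsort HC jm).
Qed.

Lemma blocks_disjoint (C1 C2 : seq P) (d1 d2 : seq bool) c :
  size d1 = (size C1).-1 -> size d2 = (size C2).-1 ->
  @rees_block disp P n t C1 d1 c -> @rees_block disp P n t C2 d2 c -> C1 = C2 /\ d1 = d2.
Proof.
move=> Hd1 Hd2 [_ [fs1 [Hf1 -> Hi1]]] [_ [fs2 [Hf2 /hat_chain_inj Ez Hi2]]].
have EC : C1 = C2 by have := congr1 unzip1 Ez; rewrite !unzip1_zip ?Hf1 ?Hf2.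
have Efs : fs1 = fs2 by have := congr1 unzip2 Ez; rewrite !unzip2_zip ?Hf1 ?Hf2.
subst C2 fs2; split=> //; apply: (@eq_from_nth _ false); first by rewrite Hd1 Hd2.
move=> i; rewrite Hd1 => iC; have iC' : 0 < i.+1 < size C1 by move: iC; clear; lia.
move: (Hi1 _ iC') (Hi2 _ iC') => /= -> /eqP; rewrite eqn_add2l.
by case: (nth false d1 i); case: (nth false d2 i).
Qed.
End Blocks.

(* [psum d i] = d_1 + ... + d_i, the length of the i-th label in a block [C, d]. *)
Definition psum (d : seq bool) (i : nat) : nat :=
  sumn (take i [seq nat_of_bool b | b <- d]).

Lemma psumS d i : i < size d -> psum d i.+1 = psum d i + nth false d i.
Proof. by move=> id; rewrite /psum (take_nth 0) ?size_map // sumn_rcons (nth_map false). Qed.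

Lemma psum_le d i : psum d i <= i.
Proof. by elim: d i => [|b d IH] [|i] //=; apply: leq_add (leq_b1 b) (IH i). Qed.

Lemma psum_mono d : {homo psum d : i j / i <= j}.
Proof. by move=> i j ij; rewrite /psum -(subnKC ij) takeD sumn_cat leq_addr. Qed.

Lemma psum_le_sum d i : psum d i <= sumn [seq nat_of_bool b | b <- d].
Proof. by rewrite /psum -[X in _ <= sumn X](cat_take_drop i) sumn_cat leq_addr. Qed.

Lemma psum_size d : psum d (size d) = sumn [seq nat_of_bool b | b <- d].
Proof. by rewrite /psum take_oversize ?size_map. Qed.

Section BlockCount.
Variables (disp : Order.disp_t) (P : finPOrderType disp) (n t : nat) (x0 : P).
Variables (C : seq P) (d : seq bool).
Hypotheses (Psp : semipure P) (Plen : poset_length P n).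
Hypotheses (HC : maxchain_in predT (@poset_lt disp P) C) (Hd : size d = (size C).-1).
Local Notation R := (P * seq 'I_t)%type.
Local Notation rle := (@rees_le disp P t).
Local Notation hat_chain := (@hat_chain disp P t).
Local Notation block := (@rees_block disp P n t C d).
Local Notation k := (sumn [seq nat_of_bool b | b <- d]).

(* The element of the block [C, d] whose top label is the word w of length k:
   its i-th label is the prefix of w of length d_1 + ... + d_i. *)
Definition block_labels (w : seq 'I_t) : seq (seq 'I_t) :=
  [seq take (psum d i) w | i <- iota 0 (size C)].

Definition block_chain (w : seq 'I_t) : seq R := zip C (block_labels w).

Lemma size_block_labels w : size (block_labels w) = size C.
Proof. by rewrite size_map size_iota. Qed.

Lemma nth_block_labels w i : i < size C -> nth [::] (block_labels w) i = take (psum d i) w.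
Proof. by move=> iC; rewrite (nth_map 0) ?size_iota // nth_iota. Qed.

Lemma size_block_chain w : size (block_chain w) = size C.
Proof. by rewrite size_zip size_block_labels minnn. Qed.

Lemma nth_block_chain w i : i < size C ->
  nth (x0, [::]) (block_chain w) i = (nth x0 C i, take (psum d i) w).
Proof. by move=> iC; rewrite nth_zip ?size_block_labels // nth_block_labels. Qed.

Lemma C_nonempty : 0 < size C.
Proof. exact: (@maxchain_nonempty _ _ _ (@poset_lt_trans disp P) C x0 HC). Qed.

Lemma psum_last : psum d (size C).-1 = k.
Proof. by rewrite -Hd psum_size. Qed.

Lemma below_size_d i : i.+1 < size C -> i < size d.
Proof. by rewrite Hd; case: (size C). Qed.

Lemma rank_C i : i < size C -> prank (nth x0 C i) = i.
Proof. exact: prank_maxchain. Qed.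

Lemma C_step i : i.+1 < size C -> (nth x0 C i < nth x0 C i.+1)%O.
Proof.
case/(maxchainP _ (@poset_lt_trans disp P)): HC => /andP[HCs _] _ iC.
exact: (sorted_ltn_nth (@poset_lt_trans disp P) x0 HCs i i.+1 (ltnW iC) iC (ltnSn i)).
Qed.

Lemma block_step w i : size w = k -> i.+1 < size C ->
  rle (nth x0 C i, take (psum d i) w) (nth x0 C i.+1, take (psum d i.+1) w).
Proof.
move=> wk iC; have iC' := ltnW iC; have id := below_size_d iC.
apply/and3P; split=> /=.
- exact/ltW/C_step.
- by rewrite prefixE size_takel ?wk ?psum_le_sum // take_takel // psum_mono.
- rewrite !size_takel ?wk ?psum_le_sum // !rank_C // psumS //.
  by rewrite addnA addSn -addn1 leq_add2l leq_b1.
Qed.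

Lemma block_chain_block w : size w = k -> block (hat_chain (block_chain w)).
Proof.
move=> wk; split; last first.
  exists (block_labels w); split=> //; first by rewrite size_block_labels.
  move=> [//|i] /= iC; rewrite !nth_block_labels ?(ltnW iC) //.
  by rewrite !size_takel ?wk ?psum_le_sum // psumS ?below_size_d.
apply: hat_maxchain_lift; last by rewrite [map _ _]unzip1_zip ?size_block_labels.
- apply/(all_nthP (x0, [::])) => i; rewrite size_block_chain => iC.
  rewrite nth_block_chain // /rees_mem /= size_takel ?wk ?psum_le_sum // rank_C // psum_le.
  by rewrite (leq_trans (psum_le d i)) // -{1}(rank_C iC) prank_le_length.
- apply/(sortedP (x0, [::])) => i; rewrite size_block_chain => iC.
  rewrite !nth_block_chain ?(ltnW iC) //.
  by apply: rees_lt_of_fst; [apply: block_step | apply: C_step].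
Qed.

(* Every element of the block [C, d] arises this way, from its top label. *)
Lemma block_chain_onto c :
  block c -> exists2 w : seq 'I_t, size w = k & c = hat_chain (block_chain w).
Proof.
case=> Hc [fs [Hfs Ec Hinc]]; rewrite Ec in Hc.
have [Hmem Hsort _] := hat_maxchain_proj x0 Hc.
have szz : size (zip C fs) = size C by rewrite size_zip Hfs minnn.
have nth_zipC i :
    i < size C -> nth (x0, [::]) (zip C fs) i = (nth x0 C i, nth [::] fs i).
  by move=> iC; rewrite nth_zip.
have Hlen i : i < size C -> size (nth [::] fs i) = psum d i.
  elim: i => [|i IH] iC.
    have := all_nthP (x0, [::]) Hmem 0; rewrite szz nth_zipC // => /(_ iC) /andP[_].
    by rewrite /= rank_C // leqn0 /psum take0 => /eqP.
  have iC' : 0 < i.+1 < size C by rewrite iC.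
  by rewrite (Hinc _ iC') IH ?(ltnW iC) // psumS ?below_size_d.
have lastC : (size C).-1 < size C by rewrite ltn_predL C_nonempty.
set w := nth [::] fs (size C).-1.
have Hpre i : i < size C -> nth [::] fs i = take (psum d i) w.
  move=> iC; have iCl : i <= (size C).-1 by rewrite -ltnS prednK ?C_nonempty.
  have : rle (nth (x0, [::]) (zip C fs) i) (nth (x0, [::]) (zip C fs) (size C).-1).
    have lastz : (size C).-1 < size (zip C fs) by rewrite szz.
    have [->|/andP[//]] :=
      sorted_nth_eq_or_lt (@rees_lt_trans disp P t) (x0, [::]) Hsort iCl lastz.
    exact: rees_le_refl.
  by rewrite !nth_zipC // => /and3P[_ /= + _]; rewrite prefixE Hlen // => /eqP.
exists w; first by rewrite /w Hlen // psum_last.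
rewrite Ec; congr (hat_chain (zip C _)); apply: (@eq_from_nth _ [::]).
  by rewrite size_block_labels.
by move=> i; rewrite Hfs => iC; rewrite nth_block_labels // Hpre.
Qed.

(* A word of length k is the top label of its chain, so it is recovered from it. *)
Lemma block_chain_inj w1 w2 :
  size w1 = k -> size w2 = k -> block_chain w1 = block_chain w2 -> w1 = w2.
Proof.
move=> w1k w2k /(congr1 unzip2); rewrite !unzip2_zip ?size_block_labels //.
move/(congr1 (nth [::] ^~ (size C).-1)); rewrite !nth_block_labels ?ltn_predL ?C_nonempty //.
by rewrite psum_last !take_oversize ?w1k ?w2k.
Qed.

Lemma block_card :
  exists l : seq (seq (R + bool)),
    [/\ uniq l, (forall c, c \in l <-> block c) & size l = t ^ k].
Proof.
exists [seq hat_chain (block_chain (val w)) | w <- enum {: k.-tuple 'I_t}]; split.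
- rewrite map_inj_uniq ?enum_uniq // => w1 w2 /hat_chain_inj.
  by move/(block_chain_inj (size_tuple w1) (size_tuple w2)); apply: val_inj.
- move=> c; split=> [/mapP[w _ ->]|/block_chain_onto[w /eqP wk ->]].
    exact/block_chain_block/size_tuple.
  by apply/mapP; exists (Tuple wk); rewrite ?mem_enum.
- by rewrite size_map -cardE card_tuple card_ord.
Qed.
End BlockCount.

Theorem proposition3p1 (disp : Order.disp_t) (P : finPOrderType disp) (n t : nat) :
  semipure P -> poset_length P n -> 1 <= t ->
  [/\ (* every maximal chain of hat(P * T_{t,n}) lies in some block [C,d] *)
      (forall c, @rees_hat_maxchain disp P n t c ->
         exists (C : seq P) (d : seq bool),
           [/\ maxchain_in predT (@poset_lt disp P) C, size d = (size C).-1 & (@rees_block disp P n t C d c)]),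
      (* the blocks are pairwise disjoint *)
      (forall (C1 C2 : seq P) (d1 d2 : seq bool) c,
         maxchain_in predT (@poset_lt disp P) C1 -> size d1 = (size C1).-1 ->
         maxchain_in predT (@poset_lt disp P) C2 -> size d2 = (size C2).-1 ->
         @rees_block disp P n t C1 d1 c -> @rees_block disp P n t C2 d2 c -> C1 = C2 /\ d1 = d2) &
      (* |[C,d]| = t^(d_1 + ... + d_m) *)
      (forall (C : seq P) (d : seq bool),
         maxchain_in predT (@poset_lt disp P) C -> size d = (size C).-1 ->
         exists l : seq (seq ((P * seq 'I_t) + bool)),
           [/\ uniq l, (forall c, c \in l <-> @rees_block disp P n t C d c)
             & size l = t ^ sumn [seq nat_of_bool b | b <- d]])].
Proof.
move=> Psp Plen _.
(* P is nonempty, as it has a chain of n + 1 elements. *)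
have [[[|p0 _] [_ //]] _] := Plen.
split.
- by move=> c; apply: (block_of_maxchain p0 Psp).
- by move=> C1 C2 d1 d2 c _ Hd1 _ Hd2; apply: (blocks_disjoint Hd1 Hd2).
- by move=> C d HC Hd; apply: (block_card t p0 Psp Plen HC Hd).
Qed.
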